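(* Let $H$ be an ASC-hypergraph on the carrier $\{1,\dots,d+1\}$ with $d\ge0$, and let $\{v\}$ be a vertex of the polytope $\mathcal G(H)$. Then there is a construction $K$ of $H$ such that $\{v\}=\bigcap\{\pi_X\mid X\in K\}$ and $v\notin\pi_Y$ for every $Y\in H\setminus K$.
   Context: A hypergraph is a finite set $H$ of nonempty subsets of some finite set; its carrier is $\bigcup H$. For a family $F$ and set $Y$, $F_Y=\{X\in F\mid X\subseteq Y\}$. A hypergraph partition of $H$ is a partition $\{H_1,\dots,H_n\}$ ($n\ge0$) of the set $H$ with $\{\bigcup H_1,\dots,\bigcup H_n\}$ a partition of $\bigcup H$; $H$ is connected if it has exactly one hypergraph partition; the finest hypergraph partition is the unique one whose blocks are connected. $H$ is atomic if $\{x\}\in H$ for all $x\in\bigcup H$; saturated if $X_1,X_2\in H$ with $X_1\cap X_2\neq\emptyset$ imply $X_1\cup X_2\in H$. An ASC-hypergraph is one that is atomic, saturated and connected. Constructions of an atomic $H$, by induction on $|\bigcup H|$: (0) $\emptyset$ is the only construction of $\emptyset$; (1) if $|\bigcup H|\ge1$, $H$ connected, $x\in\bigcup H$, $K$ a construction of $H_{\bigcup H\setminus\{x\}}$, then $K\cup\{\bigcup H\}$ is a construction of $H$; (2) if $H$ is not connected with finest hypergraph partition $\{H_1,\dots,H_n\}$, $n\ge2$, and $K_i$ is a construction of $H_i$, then $K_1\cup\dots\cup K_n$ is a construction of $H$. For $X\in H$ let $\pi_X=\{(x_1,\dots,x_{d+1})\in\mathbb R^{d+1}\mid\sum_{i\in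 X}x_i=3^{|X|}\}$ and $\pi_X^+=\{(x_1,\dots,x_{d+1})\in\mathbb R^{d+1}\mid\sum_{i\in X}x_i\ge3^{|X|}\}$. Define the convex polytope $\mathcal G(H)=\bigcap\{\pi_X^+\mid X\in H\setminus\{\bigcup H\}\}\cap\pi_{\bigcup H}$. *)

From HB Require Import structures.
From mathcomp Require Import all_boot all_order all_algebra.
Set Implicit Arguments. Unset Strict Implicit. Unset Printing Implicit Defensive.
Import Order.TTheory GRing.Theory Num.Theory.

Section Hypergraphs.
Variable T : finType.

(* A hypergraph on (a subset of) T: a finite set of nonempty subsets of T.
   Its carrier is [cover H] = \bigcup H. *)
Definition hypergraph (H : {set {set T}}) : Prop := set0 \notin H.

Definition restr (F : {set {set T}}) (Y : {set T}) : {set {set T}} :=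
  [set X in F | X \subset Y].

Definition hpartition (H : {set {set T}}) (P : {set {set {set T}}}) : Prop :=
  partition P H /\
  (forall B1 B2, B1 \in P -> B2 \in P -> B1 != B2 ->
     [disjoint cover B1 & cover B2]).

Definition connected (H : {set {set T}}) : Prop :=
  exists P, hpartition H P /\ forall P', hpartition H P' -> P' = P.

Definition finest_hpartition (H : {set {set T}}) (P : {set {set {set T}}}) : Prop :=
  hpartition H P /\ forall B, B \in P -> connected B.

Definition atomic (H : {set {set T}}) : Prop :=
  forall x, x \in cover H -> [set x] \in H.

Definition saturated (H : {set {set T}}) : Prop :=
  forall X1 X2, X1 \in H -> X2 \in H -> X1 :&: X2 != set0 -> X1 :|: X2 \in H.

Definition ASC (H : {set {set T}}) : Prop :=
  hypergraph H /\ atomic H /\ saturated H /\ connected H.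

Inductive construction : {set {set T}} -> {set {set T}} -> Prop :=
| constr_empty : construction set0 set0
| constr_conn (H K : {set {set T}}) (x : T) :
    cover H != set0 -> connected H -> x \in cover H ->
    construction (restr H (cover H :\ x)) K ->
    construction H (K :|: [set cover H])
| constr_split (H : {set {set T}}) (P : {set {set {set T}}})
    (Kf : {set {set T}} -> {set {set T}}) :
    ~ connected H -> finest_hpartition H P -> 2 <= #|P| ->
    (forall Hi, Hi \in P -> construction Hi (Kf Hi)) ->
    construction H (\bigcup_(Hi in P) Kf Hi).

End Hypergraphs.

Local Open Scope ring_scope.

(* points of R^(d+1) are row vectors; coordinate i of x is x ord0 i *)
Definition pi_ (R : realFieldType) (d : nat) (X : {set 'I_d.+1}) : pred 'rV[R]_d.+1 :=
  fun x => \sum_(i in X) x ord0 i == (3 ^ #|X|)%N%:R.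

Definition pi_plus (R : realFieldType) (d : nat) (X : {set 'I_d.+1}) : pred 'rV[R]_d.+1 :=
  fun x => (3 ^ #|X|)%N%:R <= \sum_(i in X) x ord0 i.

Definition polytopeG (R : realFieldType) (d : nat) (H : {set {set 'I_d.+1}})
  : pred 'rV[R]_d.+1 :=
  fun x => [forall X in H :\ cover H, @pi_plus R d X x] && @pi_ R d (cover H) x.

Definition is_vertex (R : realFieldType) (n : nat) (S : pred 'rV[R]_n) (v : 'rV[R]_n) : Prop :=
  S v /\ forall x y (t : R), S x -> S y -> 0 < t < 1 ->
    v = t *: x + (1 - t) *: y -> x = y.

(* Call X in H tight when the vertex v lies on pi_X.  Since 3^a + 3^b < 3^c
   whenever a, b < c, intersecting tight sets are nested, and the maximal tight
   sets strictly inside a nonempty C in H cannot cover C.  Because v is a vertex,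
   no nonzero direction is orthogonal to all tight sets, i.e. their indicator
   vectors span.  By induction on C, the tight sets inside C form a construction
   of H_C: if C is in H, a point x of C outside all smaller tight sets exists, the
   spanning property forces C to be tight and descends to C \ {x}; otherwise it
   descends to the components of H_C.  For C the whole carrier this gives K, and
   the spanning property pins down v as the only point of all pi_X, X in K. *)

From HB Require Import structures.
From mathcomp Require Import all_boot all_order all_algebra zify ring lra.
Import Order.TTheory GRing.Theory Num.Theory.
Set Implicit Arguments. Unset Strict Implicit. Unset Printing Implicit Defensive.

Lemma ltn_add_expn b m n p : 2 < b -> m < p -> n < p -> b ^ m + b ^ n < b ^ p.
Proof.
move=> b3 mp np; have p0 : 0 < p := leq_ltn_trans (leq0n m) mp.
have b1 : 1 < b := ltnW b3.
have bm : b ^ m <= b ^ p.-1 by rewrite leq_exp2l // -ltnS prednK.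
have bn : b ^ n <= b ^ p.-1 by rewrite leq_exp2l // -ltnS prednK.
have -> : b ^ p = b * b ^ p.-1 by rewrite -expnS prednK.
nia.
Qed.

Lemma sum_expn_le (I : Type) (r : seq I) (a : I -> nat) b :
  1 < b -> all (fun i => 0 < a i) r ->
  \sum_(i <- r) b ^ a i <= b ^ (\sum_(i <- r) a i).
Proof.
move=> b1; elim: r => [|x [|y r] IH] /=; first by rewrite !big_nil.
  by rewrite !big_seq1.
move=> /andP[ax ar]; have SA := IH ar.
have A0 : 0 < \sum_(i <- y :: r) a i.
  by case/andP: ar => ay _; rewrite big_cons ltn_addr.
have bge k : 0 < k -> 2 <= b ^ k.
  by move=> k0; apply: leq_trans (b1) _; rewrite -{1}(expn1 b) leq_exp2l.
rewrite big_cons [in X in _ <= X]big_cons expnD.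
have := bge _ ax; have := bge _ A0; nia.
Qed.

Lemma sum_expn_lt (I : finType) (P : pred I) (a : I -> nat) b x y :
  2 < b -> (forall i, P i -> 0 < a i) -> P x -> P y -> x != y ->
  \sum_(i | P i) b ^ a i < b ^ (\sum_(i | P i) a i).
Proof.
have key m n s : 3 <= m -> 3 <= n -> s <= n -> m + s < m * n by nia.
move=> b3 a_gt0 Px Py xy.
have bge k : 0 < k -> 3 <= b ^ k.
  by move=> k0; apply: leq_trans (b3) _; rewrite -{1}(expn1 b) leq_exp2l // ltnW.
rewrite (bigD1 x Px) [in X in _ < X](bigD1 x Px) /= expnD.
have le : \sum_(i | P i && (i != x)) b ^ a i <= b ^ (\sum_(i | P i && (i != x)) a i).
  rewrite -2!(big_filter _ (fun i => P i && (i != x))).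
  apply: sum_expn_le (ltnW b3) _.
  by apply/allP => i; rewrite mem_filter => /andP[/andP[/a_gt0]].
have A0 : 0 < \sum_(i | P i && (i != x)) a i.
  rewrite (bigD1 y) /=; first exact: ltn_addr (a_gt0 y Py).
  by rewrite Py eq_sym.
exact: key (bge _ (a_gt0 x Px)) (bge _ A0) le.
Qed.

Section Hypergraphs.
Variable T : finType.
Implicit Types (G F : {set {set T}}) (C D M X Y : {set T}).

Definition maximals G := [set M | maxset (mem G) M].

Lemma maximalsP G M :
  reflect (M \in G /\ forall X, X \in G -> M \subset X -> X = M) (M \in maximals G).
Proof. by rewrite inE; apply: maxsetP. Qed.

Lemma mem_maximals G M : M \in maximals G -> M \in G.
Proof. by case/maximalsP. Qed.

Lemma maximals_exists G X : X \in G -> exists2 M, M \in maximals G & X \subset M.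
Proof. by move=> XG; have [M ? ?] := maxset_exists XG; exists M; rewrite ?inE. Qed.

Lemma maximals_disjoint G M1 M2 :
  (forall X Y, X \in G -> Y \in G -> X :&: Y != set0 ->
     exists2 Z, Z \in G & X :|: Y \subset Z) ->
  M1 \in maximals G -> M2 \in maximals G -> M1 != M2 -> [disjoint M1 & M2].
Proof.
move=> bound /maximalsP[M1G max1] /maximalsP[M2G max2].
rewrite -setI_eq0; apply: contraNT => /(bound _ _ M1G M2G)[Z ZG].
rewrite subUset => /andP[M1Z M2Z].
by rewrite -(max1 _ ZG M1Z) (max2 _ ZG M2Z).
Qed.

Lemma maximals_disjoint_saturated G M1 M2 : saturated G ->
  M1 \in maximals G -> M2 \in maximals G -> M1 != M2 -> [disjoint M1 & M2].
Proof.
by move=> sat; apply: maximals_disjoint => X Y XG YG XY; exists (X :|: Y); rewrite ?sat.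
Qed.

Lemma restrE G C X : (X \in restr G C) = (X \in G) && (X \subset C).
Proof. by rewrite inE. Qed.

Lemma cover_restr G M : M \in G -> cover (restr G M) = M.
Proof.
move=> MG; apply/eqP; rewrite eqEsubset; apply/andP; split.
  by apply/bigcupsP => X; rewrite restrE => /andP[].
by apply: bigcup_sup; rewrite restrE MG subxx.
Qed.

Lemma restr_restr G C D : D \subset C -> restr (restr G C) D = restr G D.
Proof.
move=> DC; apply/setP => X; rewrite !restrE -andbA.
by apply: andb_id2l => _; apply/andb_idl => /subset_trans->.
Qed.

Lemma restr_setT G : restr G [set: T] = G.
Proof. by apply/setP => X; rewrite restrE subsetT andbT. Qed.

Lemma restr_set0 G : set0 \notin G -> restr G set0 = set0.
Proof.
move=> G0; apply/setP => X; rewrite restrE subset0 inE.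
by case: eqP => [->|]; rewrite ?(negbTE G0) ?andbF.
Qed.

Lemma set0_notin_restr G C : set0 \notin G -> set0 \notin restr G C.
Proof. by rewrite restrE negb_and => ->. Qed.

Lemma saturated_restr G C : saturated G -> saturated (restr G C).
Proof.
move=> sat X1 X2; rewrite !restrE => /andP[X1G X1C] /andP[X2G X2C] X12.
by rewrite sat // subUset X1C X2C.
Qed.

Lemma restr_setD1 F C x : C \in F -> x \in C ->
  (forall X, X \in F -> X \proper C -> x \notin X) ->
  restr F C = restr F (C :\ x) :|: [set C].
Proof.
move=> CF xC avoid; apply/setP => X; rewrite in_setU in_set1 !restrE.
have [->|XC] := eqVneq X C; first by rewrite CF subxx orbT.
rewrite orbF; apply: andb_id2l => XF; apply/idP/idP => [XsubC|]; last first.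
  by move/subset_trans; apply; apply: subsetDl.
rewrite subsetD1 XsubC; apply: avoid => //.
by rewrite properEneq XC.
Qed.

Definition components G := [set restr G M | M in maximals G].

Lemma hpartition1 G : G != set0 -> hpartition G [set G].
Proof.
move=> G0; split; last by move=> B1 B2 /set1P-> /set1P->; rewrite eqxx.
by rewrite /partition cover1 trivIset1 eqxx inE eq_sym G0.
Qed.

Lemma hpartition_components G :
  set0 \notin G -> saturated G -> hpartition G (components G).
Proof.
move=> G0 sat.
have disjM M1 M2 : M1 \in maximals G -> M2 \in maximals G ->
    restr G M1 != restr G M2 -> [disjoint M1 & M2].
  move=> M1G M2G; apply: contraNT => M12.
  by rewrite (eqP (contraNT (maximals_disjoint_saturated sat M1G M2G) M12)).
split; last first.
  move=> _ _ /imsetP[M1 M1G ->] /imsetP[M2 M2G ->] /(disjM _ _ M1G M2G).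
  by rewrite !cover_restr //; apply: mem_maximals.
apply/and3P; split.
- apply/eqP/setP => X; apply/bigcupP/idP => [[_ /imsetP[M _ ->]]|XG].
    by rewrite restrE => /andP[].
  have [M MG XM] := maximals_exists XG.
  by exists (restr G M); [apply: imset_f | rewrite restrE XG].
- apply/trivIsetP => _ _ /imsetP[M1 M1G ->] /imsetP[M2 M2G ->] /(disjM _ _ M1G M2G).
  move=> dM; rewrite -setI_eq0; apply/eqP/setP => X; rewrite !inE.
  apply/negbTE/negP => /andP[/andP[XG X1] /andP[_ X2]].
  have : X \subset M1 :&: M2 by rewrite subsetI X1 X2.
  by rewrite (disjoint_setI0 dM) subset0 => /eqP X0; rewrite -X0 XG in G0.
- apply/imsetP => -[M /mem_maximals MG E].
  by have := MG; rewrite -[M](cover_restr MG) -E /cover big_set0 (negbTE G0).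
Qed.

Lemma connected_of_cover G : set0 \notin G -> cover G \in G -> connected G.
Proof.
move=> G0 cG; have GG0 : G != set0 by apply/set0Pn; exists (cover G).
exists [set G]; split=> [|P [/and3P[/eqP covP _ P0] disjP]]; first exact: hpartition1.
have /bigcupP[B BP cGB] : cover G \in cover P by rewrite covP.
suff PB : P = [set B] by rewrite PB -covP PB cover1.
apply/setP => B'; rewrite inE; apply/idP/eqP => [B'P|->//].
apply/eqP/negPn/negP => B'B.
have /set0Pn[Y YB'] : B' != set0 by apply: contraNneq P0 => <-.
have YG : Y \in G by rewrite -covP; apply/bigcupP; exists B'.
have /set0Pn[y yY] : Y != set0 by apply: contraNneq G0 => <-.
have yB' : y \in cover B' by apply/bigcupP; exists Y.
have yB : y \in cover B by apply: subsetP (bigcup_sup _ cGB) _ _; apply/bigcupP; exists Y.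
by rewrite (disjointFr (disjP _ _ B'P BP B'B) yB') in yB.
Qed.

Lemma components_split G : set0 \notin G -> saturated G -> cover G \notin G -> G != set0 ->
  [/\ ~ connected G, finest_hpartition G (components G) & 1 < #|components G|].
Proof.
move=> G0 sat covG GG0; have hpG := hpartition_components G0 sat.
have two : 1 < #|components G|.
  have [X XG] := set0Pn _ GG0; have [M1 M1max _] := maximals_exists XG.
  have M1G := mem_maximals M1max.
  have : M1 \proper cover G.
    by rewrite properEneq bigcup_sup // andbT; apply: contraNneq covG => <-.
  case/properP => _ [y /bigcupP[Y YG yY] yM1].
  have [M2 M2max YM2] := maximals_exists YG; have M2G := mem_maximals M2max.
  apply/card_gt1P; exists (restr G M1), (restr G M2).
  split; [exact: imset_f | exact: imset_f | apply: contraNneq yM1 => E].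
  by rewrite -(cover_restr M1G) E cover_restr // (subsetP YM2).
split=> //.
  move=> [P [_ uniqP]]; move: two.
  by rewrite (uniqP _ hpG) -(uniqP _ (hpartition1 GG0)) cards1.
split=> // _ /imsetP[M /mem_maximals MG ->].
apply: connected_of_cover; first exact: set0_notin_restr.
by rewrite cover_restr // restrE MG subxx.
Qed.

Lemma cover_mem_connected G :
  set0 \notin G -> saturated G -> connected G -> G != set0 -> cover G \in G.
Proof.
by move=> G0 sat conn GG0; apply: contraT => covG; case: (components_split G0 sat covG GG0).
Qed.

Lemma restr_bigcup_components F G C : F \subset G ->
  restr F C = \bigcup_(B in components (restr G C)) restr F (cover B).
Proof.
move=> FG; apply/setP => X; apply/idP/bigcupP => [|[_ /imsetP[M Mmax ->]]].
  rewrite restrE => /andP[XF XC].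
  have XGC : X \in restr G C by rewrite restrE (subsetP FG).
  have [M Mmax XM] := maximals_exists XGC.
  exists (restr (restr G C) M); first exact: imset_f.
  by rewrite (cover_restr (mem_maximals Mmax)) restrE XF.
have MGC := mem_maximals Mmax; move: (MGC); rewrite restrE => /andP[_ MC].
rewrite cover_restr // !restrE => /andP[-> XM].
exact: subset_trans XM MC.
Qed.

End Hypergraphs.

Local Open Scope ring_scope.

Lemma sum_delta (R : nzRingType) (T : finType) (C : {set T}) x :
  \sum_(i in C) ((i == x)%:R : R) = (x \in C)%:R.
Proof.
case: (boolP (x \in C)) => [xC|xC]; last first.
  by rewrite big1 // => i iC; case: eqP => // ix; rewrite -ix iC in xC.
by rewrite (bigD1 x xC) /= eqxx big1 ?addr0 // => i /andP[_ /negbTE->].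
Qed.

(* The dual form of: the indicator vectors of the members of F contained in C
   span the space of functions supported on C. *)
Definition spans (R : nzRingType) (T : finType) (F : {set {set T}}) (C : {set T}) :=
  forall f : T -> R, (forall i, i \notin C -> f i = 0) ->
  (forall X, X \in F -> X \subset C -> \sum_(i in X) f i = 0) -> forall i, f i = 0.

Section Spanning.
Variables (R : nzRingType) (T : finType) (F : {set {set T}}).
Implicit Types (C M X : {set T}).

Lemma spans_mem C x : spans R F C -> x \in C ->
  exists2 X, X \in F & (X \subset C) && (x \in X).
Proof.
move=> spC xC.
have [/exists_inP[X XF /andP[XC xX]]|none] := boolP [exists X in F, (X \subset C) && (x \in X)].
  by exists X; rewrite ?XC.
suff : ((x == x)%:R : R) = 0 by rewrite eqxx => /eqP; rewrite oner_eq0.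
apply: (spC (fun i => (i == x)%:R)) => [i|X XF XC]; first by case: eqP => // ->; rewrite xC.
rewrite sum_delta; case: (boolP (x \in X)) => // xX.
by case/negP: none; apply/exists_inP; exists X; rewrite ?XC.
Qed.

Lemma spans_setD1 C x : spans R F C -> C \in F -> x \in C ->
  (forall X, X \in F -> X \proper C -> x \notin X) -> spans R F (C :\ x).
Proof.
move=> spC CF xC avoid f f0 fF.
pose c := \sum_(i in C) f i.
have fx : f x = 0 by apply: f0; rewrite !inE eqxx.
(* f - c \delta_x vanishes on C itself and agrees with f on the other members of F. *)
have g0 : forall i, f i - c * (i == x)%:R = 0.
  apply: spC => [i iC|X XF XC].
    have ix : i != x by apply: contraNneq iC => ->.
    by rewrite (negbTE ix) mulr0 subr0 f0 // !inE negb_and iC orbT.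
  rewrite sumrB -mulr_sumr sum_delta.
  have [->|XnC] := eqVneq X C; first by rewrite xC mulr1 subrr.
  have xX : x \notin X by apply: avoid; rewrite // properEneq XnC.
  by rewrite (negbTE xX) mulr0 subr0 fF // subsetD1 XC.
have c0 : c = 0.
  by move: (g0 x); rewrite fx eqxx mulr1 sub0r => /eqP; rewrite oppr_eq0 => /eqP.
by move=> i; move: (g0 i); rewrite c0 mul0r subr0.
Qed.

Lemma spans_sub C M : spans R F C -> M \subset C ->
  (forall X, X \in F -> X \subset C -> X \subset M \/ [disjoint X & M]) -> spans R F M.
Proof.
move=> spC MC nested f f0 fF; apply: spC => [i iC|X XF XC].
  by apply: f0; apply: contra iC; apply: subsetP.
case: (nested X XF XC) => [XM|dXM]; first exact: fF.
by apply: big1 => i iX; apply: f0; rewrite (disjointFr dXM).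
Qed.

End Spanning.

Section TightSets.
Variables (R : realFieldType) (T : finType) (H : {set {set T}}) (v : T -> R).
Hypotheses (H0 : set0 \notin H) (atomH : forall i, [set i] \in H) (satH : saturated H)
  (v_ge : forall X, X \in H -> (3 ^ #|X|)%:R <= \sum_(i in X) v i).
Implicit Types (C D M X Y : {set T}).

Definition tight := [set X in H | \sum_(i in X) v i == (3 ^ #|X|)%:R].

Lemma tightP X : reflect (X \in H /\ \sum_(i in X) v i = (3 ^ #|X|)%:R) (X \in tight).
Proof. by rewrite inE; apply: (iffP andP) => -[-> /eqP]. Qed.

Lemma tight_sub : tight \subset H.
Proof. by apply/subsetP => X /tightP[]. Qed.

Lemma v_gt0 i : 0 < v i.
Proof.
by have := v_ge (atomH i); rewrite big_set1 cards1 expn1; apply: lt_le_trans; rewrite ltr0n.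
Qed.

Lemma sum_v_le X Y : X \subset Y -> \sum_(i in X) v i <= \sum_(i in Y) v i.
Proof.
move=> XY; rewrite (big_setID (A := Y) X) /= (setIidPr XY) lerDl.
by apply: sumr_ge0 => i _; apply: ltW (v_gt0 i).
Qed.

Lemma tight_laminar X Y : X \in tight -> Y \in tight -> X :&: Y != set0 ->
  X \subset Y \/ Y \subset X.
Proof.
move=> /tightP[XH eX] /tightP[YH eY] XY0.
case XY: (X \subset Y); first by left.
case YX: (Y \subset X); first by right.
have pX : X \proper X :|: Y.
  by rewrite properEneq subsetUl andbT; apply: contraFneq YX => ->; apply: subsetUr.
have pY : Y \proper X :|: Y.
  by rewrite properEneq subsetUr andbT; apply: contraFneq XY => ->; apply: subsetUl.
have le : \sum_(i in X :|: Y) v i <= \sum_(i in X) v i + \sum_(i in Y) v i.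
  rewrite (big_setID (A := X :|: Y) X) /= setIUl setIid (setUidPl (subsetIr _ _)) lerD2l.
  by apply: sum_v_le; apply/subsetP => i; rewrite !inE => /andP[/negbTE->].
have := le_trans (v_ge (satH XH YH XY0)) le.
by rewrite eX eY -natrD ler_nat leqNgt ltn_add_expn // proper_card.
Qed.

Definition tight_children C := maximals [set X in tight | X \proper C].

Lemma proper_tightE C X :
  (X \in [set Y in tight | Y \proper C]) = (X \in tight) && (X \proper C).
Proof. by rewrite !inE. Qed.

Lemma tight_childrenP C N : N \in tight_children C -> N \in tight /\ N \proper C.
Proof. by move/mem_maximals; rewrite proper_tightE => /andP[]. Qed.

Lemma trivIset_tight_children C : trivIset (tight_children C).
Proof.
apply/trivIsetP => N1 N2; apply: maximals_disjoint => X Y XF YF XY0.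
move: (XF) (YF); rewrite !proper_tightE => /andP[XT _] /andP[YT _].
case: (tight_laminar XT YT XY0) => [XY|YX]; [exists Y | exists X] => //;
  by rewrite subUset subxx ?XY ?YX.
Qed.

Lemma cover_tight_children C : C \in H -> C != set0 -> cover (tight_children C) != C.
Proof.
move=> CH C0; apply/eqP => covC.
have sumC : \sum_(i in cover (tight_children C)) v i
    = (\sum_(N in tight_children C) 3 ^ #|N|)%:R.
  rewrite big_trivIset ?trivIset_tight_children // natr_sum.
  by apply: eq_bigr => N /tight_childrenP[/tightP[_ ->]].
have cardC : #|cover (tight_children C)| = (\sum_(N in tight_children C) #|N|)%N.
  by rewrite (eqP (trivIset_tight_children C)).
rewrite covC in sumC cardC.
have [/card_gt1P[N1 [N2 [N1C N2C N12]]]|] := ltnP 1 #|tight_children C|.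
  have := v_ge CH; rewrite sumC cardC ler_nat leqNgt.
  rewrite (sum_expn_lt (P := mem (tight_children C)) _ _ N1C N2C N12) //.
  move=> N /tight_childrenP[/tightP[NH _] _]; rewrite card_gt0.
  by apply: contraNneq H0 => <-.
rewrite leq_eqVlt ltnS leqn0 cards_eq0 => /orP[/cards1P[N eN]|/eqP e0].
  have /tight_childrenP[_] : N \in tight_children C by rewrite eN set11.
  by rewrite -covC eN cover1 properxx.
by move: C0; rewrite -covC e0 /cover big_set0 eqxx.
Qed.

Lemma exists_untight_point C : C \in H -> C != set0 ->
  exists2 x, x \in C & forall X, X \in tight -> X \proper C -> x \notin X.
Proof.
move=> CH C0; have : cover (tight_children C) \proper C.
  rewrite properEneq cover_tight_children //=.
  by apply/bigcupsP => N /tight_childrenP[_ /properP[]].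
case/properP => _ [x xC xU]; exists x => // X XT XC.
apply: contra xU => xX.
have XP : X \in [set Y in tight | Y \proper C] by rewrite proper_tightE XT.
have [N NC XN] := maximals_exists XP.
by apply/bigcupP; exists N => //; apply: subsetP xX.
Qed.

Lemma cover_restr_atomic C : cover (restr H C) = C.
Proof.
apply/eqP; rewrite eqEsubset; apply/andP; split.
  by apply/bigcupsP => X; rewrite restrE => /andP[].
apply/subsetP => i iC; apply/bigcupP; exists [set i]; last exact: set11.
by rewrite restrE atomH sub1set.
Qed.

Section ConstructionStep.
Variable C : {set T}.
Hypotheses (C0 : C != set0) (spC : spans R tight C)
  (IH : forall D, D \proper C -> spans R tight D -> construction (restr H D) (restr tight D)).

Lemma construction_restr_tight_mem :
  C \in H -> construction (restr H C) (restr tight C).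
Proof.
move=> CH; have [x xC avoid] := exists_untight_point CH C0.
have CT : C \in tight.
  have [X XT /andP[XC xX]] := spans_mem spC xC.
  have [<-//|XnC] := eqVneq X C.
  by move: (avoid X XT); rewrite properEneq XnC XC xX => /(_ isT).
rewrite (restr_setD1 CT xC avoid).
have := @constr_conn _ (restr H C) (restr tight (C :\ x)) x.
rewrite cover_restr_atomic restr_restr ?subsetDl //; apply => //.
  apply: connected_of_cover; first exact: set0_notin_restr.
  by rewrite cover_restr_atomic restrE CH subxx.
apply: IH; first by rewrite properD1.
exact: spans_setD1.
Qed.

Lemma construction_restr_tight_notin :
  C \notin H -> construction (restr H C) (restr tight C).
Proof.
move=> CnH; set G := restr H C.
have covG : cover G = C := cover_restr_atomic C.
have GG0 : G != set0.
  by have [x xC] := set0Pn _ C0; apply/set0Pn; exists [set x]; rewrite restrE atomH sub1set.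
have covGG : cover G \notin G by rewrite covG restrE (negbTE CnH).
have [nconn fin two] :=
  components_split (set0_notin_restr C H0) (saturated_restr (C := C) satH) covGG GG0.
rewrite (restr_bigcup_components C tight_sub); apply: constr_split nconn fin two _.
move=> _ /imsetP[M Mmax ->]; have MG := mem_maximals Mmax.
have /andP[MH MC] : (M \in H) && (M \subset C) by rewrite -restrE.
rewrite cover_restr // restr_restr //; apply: IH.
  by rewrite properEneq MC andbT; apply: contraNneq CnH => <-.
apply: (spans_sub spC MC) => X XT XC.
have XG : X \in G by rewrite restrE (subsetP tight_sub).
have [M' M'max XM'] := maximals_exists XG.
have [<-|M'M] := eqVneq M' M; first by left.
right; apply: disjointWl XM' _.
exact: maximals_disjoint_saturated (saturated_restr (C := C) satH) M'max Mmax M'M.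
Qed.

End ConstructionStep.

Lemma construction_restr_tight C :
  spans R tight C -> construction (restr H C) (restr tight C).
Proof.
move: {2}#|C|.+1 (ltnSn #|C|) => n; elim: n C => [//|n IHn] C Cn spC.
have [->|C0] := eqVneq C set0.
  rewrite !restr_set0 //; first exact: constr_empty.
  exact: contra (subsetP tight_sub set0) H0.
have IH D : D \proper C -> spans R tight D -> construction (restr H D) (restr tight D).
  by move=> /proper_card DC; apply: IHn; apply: leq_trans DC _.
have [CH|CnH] := boolP (C \in H).
  exact: construction_restr_tight_mem.
exact: construction_restr_tight_notin.
Qed.

End TightSets.

Lemma is_vertex_midpoint (R : realFieldType) n (S : pred 'rV[R]_n) v w :
  is_vertex S v -> S (v + w) -> S (v - w) -> w = 0.
Proof.
move=> [_ ext] Svw Svw'.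
have half : 0 < (2 : R)^-1 < 1 by apply/andP; split; lra.
have /ext : v = 2^-1 *: (v + w) + (1 - 2^-1) *: (v - w).
  by apply/rowP => j; rewrite !mxE; field.
move=> /(_ Svw Svw' half) /rowP eqw; apply/rowP => j.
by move: (eqw j); rewrite !mxE; lra.
Qed.

Lemma exists_margin (R : realFieldType) (I : finType) (P : pred I) (s F : I -> R) :
  (forall i, P i -> 0 < s i) -> exists2 e : R, 0 < e & forall i, P i -> e * `|F i| <= s i.
Proof.
move=> s_gt0; set S := \sum_(i | P i) `|F i| / s i.
have S_ge0 : 0 <= S by apply: sumr_ge0 => i Pi; rewrite divr_ge0 // ltW ?s_gt0.
exists (1 + S)^-1; first by rewrite invr_gt0 ltr_pwDl.
move=> i Pi; have si := s_gt0 i Pi.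
have : `|F i| / s i <= S.
  rewrite /S (bigD1 i Pi) /= lerDl.
  by apply: sumr_ge0 => j /andP[Pj _]; rewrite divr_ge0 // ltW ?s_gt0.
rewrite ler_pdivrMr // => FS.
rewrite mulrC ler_pdivrMr ?ltr_pwDl //; apply: le_trans FS _.
by rewrite mulrDr mulr1 mulrC lerDr ltW.
Qed.

Lemma polytopeG_ge (R : realFieldType) d (H : {set {set 'I_d.+1}}) (x : 'rV[R]_d.+1) X :
  @polytopeG R d H x -> X \in H -> (3 ^ #|X|)%:R <= \sum_(i in X) x ord0 i.
Proof.
case/andP => /forall_inP ge /eqP eq XH.
have [->|XnC] := eqVneq X (cover H); first by rewrite eq.
by apply: ge; rewrite !inE XnC.
Qed.

(* A vertex is not the midpoint of a segment in the direction of a function f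
   orthogonal to all tight sets, since the non-tight inequalities have slack. *)
Lemma vertex_tight_spans (R : realFieldType) d (H : {set {set 'I_d.+1}}) (v : 'rV[R]_d.+1) :
  cover H \in H -> is_vertex (@polytopeG R d H) v ->
  spans R (tight H (fun i => v ord0 i)) (cover H).
Proof.
move=> covH vert f _ fT; have v_ge := polytopeG_ge vert.1.
set TH := tight H _ in fT; pose w := \row_i f i.
pose s (X : {set 'I_d.+1}) := \sum_(i in X) v ord0 i - (3 ^ #|X|)%:R.
have slack X : (X \in H) && (X \notin TH) -> 0 < s X.
  move=> /andP[XH]; rewrite inE XH /= => XnT.
  by rewrite subr_gt0 lt_def XnT v_ge.
have [e e_gt0 margin] := exists_margin (fun X : {set 'I_d.+1} => \sum_(i in X) f i) slack.
have sumE c (X : {set 'I_d.+1}) :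
    \sum_(i in X) (v + c *: w) ord0 i = \sum_(i in X) v ord0 i + c * \sum_(i in X) f i.
  by rewrite mulr_sumr -big_split; apply: eq_bigr => i _; rewrite !mxE.
have covT : cover H \in TH by rewrite inE covH; case/andP: vert.1.
have shift c : `|c| <= e -> @polytopeG R d H (v + c *: w).
  move=> ce; apply/andP; split; last first.
    by rewrite /pi_ sumE fT // mulr0 addr0; case/andP: vert.1.
  apply/forall_inP => X /setD1P[_ XH]; rewrite /pi_plus sumE.
  have [XT|XnT] := boolP (X \in TH); first by rewrite fT ?bigcup_sup // mulr0 addr0 v_ge.
  have := margin X; rewrite XH XnT => /(_ isT) eF.
  rewrite -lerBlDl; apply: le_trans (_ : - s X <= _).
    by rewrite /s opprB.
  rewrite lerNl; apply: le_trans (ler_norm _) _.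
  rewrite normrN normrM; apply: le_trans eF.
  by rewrite ler_wpM2r.
have ee : `|e| <= e by rewrite ger0_norm // ltW.
have := shift (- e); rewrite normrN scaleNr => /(_ ee) Sminus.
move=> i; have /rowP/(_ i) := is_vertex_midpoint vert (shift e ee) Sminus.
by rewrite !mxE => /eqP; rewrite mulf_eq0 (gt_eqF e_gt0) => /eqP.
Qed.

Theorem proposition9p3 (R : realFieldType) (d : nat) (H : {set {set 'I_d.+1}})
  (v : 'rV[R]_d.+1) :
  ASC H -> cover H = [set: 'I_d.+1] ->
  is_vertex (@polytopeG R d H) v ->
  exists K : {set {set 'I_d.+1}},
    construction H K /\
    (forall x : 'rV[R]_d.+1, (forall X, X \in K -> @pi_ R d X x) <-> x = v) /\
    (forall Y, Y \in H :\: K -> ~~ @pi_ R d Y v).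
Proof.
move=> [H0 [atomH [satH connH]]] covT vert.
have atom i : [set i] \in H by apply: atomH; rewrite covT inE.
have covH : cover H \in H.
  by apply: cover_mem_connected => //; apply/set0Pn; exists [set ord0].
have spT := vertex_tight_spans covH vert; rewrite covT in spT.
have constr := construction_restr_tight H0 atom satH (fun X => polytopeG_ge vert.1) spT.
rewrite !restr_setT in constr.
exists (tight H (fun i => v ord0 i)); split=> //; split=> [x|Y]; last first.
  by rewrite !inE => /andP[YnT YH]; apply: contra YnT => piY; rewrite YH.
split=> [xT|-> X /tightP[_ eX]]; last exact/eqP.
apply/rowP => j; apply/eqP; rewrite -subr_eq0; apply/eqP.
apply: (spT (fun i => x ord0 i - v ord0 i)) => [i|X XT _]; first by rewrite inE.
by rewrite sumrB (eqP (xT X XT)); case/tightP: XT => _ ->; rewrite subrr.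
Qed.
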